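(* For non-negative integers $p_1,p_2,r$ and $x_1,x_2\in\mathbb{C}$, $$\sum_{l=0}^{p_1+p_2}S_{1,x_1}^{1,x_2,p_2}(p_1,l)\,(-1)^{l}(l+r)!=r!\,(x_1-r-1)^{p_1}(x_2-r-1)^{p_2}.$$ Consequently $B^{(0)}_{p_1,p_2}(x_1,x_2)=(x_1-1)^{p_1}(x_2-1)^{p_2}$ and $B^{(-1)}_{p_1,p_2}(x_1,x_2)=(x_1-2)^{p_1}(x_2-2)^{p_2}$.
   Context: For non-negative integers $p_1,p_2,l$ and $x_1,x_2\in\mathbb{C}$, the generalized Stirling numbers are $$S_{1,x_1}^{1,x_2,p_2}(p_1,l)=\frac{1}{l!}\sum_{j=0}^{l}(-1)^{j}\binom{l}{j}(l-j+x_1)^{p_1}(l-j+x_2)^{p_2}.$$ For an integer $k$, the bi-variate poly-Bernoulli polynomial is $$B^{(k)}_{p_1,p_2}(x_1,x_2)=\sum_{l=0}^{p_1+p_2}S_{1,x_1}^{1,x_2,p_2}(p_1,l)\frac{(-1)^{l}\,l!}{(l+1)^{k}}.$$ *)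

From mathcomp Require Import all_boot all_order all_algebra.
From mathcomp Require Import complex.
Set Implicit Arguments. Unset Strict Implicit. Unset Printing Implicit Defensive.
Import Order.TTheory GRing.Theory Num.Theory.
Local Open Scope ring_scope.

Definition genStirling {C : comUnitRingType} (x1 x2 : C) (p1 p2 l : nat) : C :=
  (l`!%:R)^-1 * \sum_(0 <= j < l.+1)
     (-1) ^+ j * 'C(l, j)%:R * ((l - j)%:R + x1) ^+ p1 * ((l - j)%:R + x2) ^+ p2.

(* Bi-variate poly-Bernoulli polynomial B^{(k)}_{p1,p2}(x1,x2), k : int;
   1/(l+1)^k is written (l+1)^(-k) (integer exponent). *)
Definition polyBernoulli2 {C : comUnitRingType} (k : int) (p1 p2 : nat) (x1 x2 : C) : C :=
  \sum_(0 <= l < (p1 + p2).+1)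
     genStirling x1 x2 p1 p2 l * ((-1) ^+ l * l`!%:R) * ((l.+1)%:R ^ (- k)).

From mathcomp Require Import all_boot all_order all_algebra.
From mathcomp Require Import complex.
From mathcomp Require Import reals.
From mathcomp Require Import ring.
Set Implicit Arguments. Unset Strict Implicit. Unset Printing Implicit Defensive.
Import Order.TTheory GRing.Theory Num.Theory.
Local Open Scope ring_scope.

(** [genStirling x1 x2 p1 p2 l] is [Δ^l f(0) / l!] for the forward difference [Δ]
    and [f x = (x + x1)^p1 (x + x2)^p2]. As [deg f <= p1 + p2], Newton's
    interpolation formula gives [f x = \sum_(l <= p1 + p2) Δ^l f(0) / l! * x^_l],
    and at [x = -(r+1)] the falling factorial [x^_l] is [(-1)^l (l + r)! / r!]. *)

Lemma ffactD n m k : (n ^_ (m + k) = n ^_ m * (n - m) ^_ k)%N.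
Proof.
elim: k => [|k IH]; first by rewrite addn0 ffactn0 muln1.
by rewrite addnS !ffactnSr IH subnDA mulnA.
Qed.

Lemma mul_bin_ffact l i j : ('C(l, j) * (l - j) ^_ i = l ^_ i * 'C(l - i, j))%N.
Proof.
apply/eqP; rewrite -(eqn_pmul2r (fact_gt0 j)) mulnAC bin_ffact -ffactD.
by rewrite -mulnA bin_ffact -ffactD addnC.
Qed.

Lemma size_subr_coefZ_monic (R : nzRingType) (p q : {poly R}) n :
  q \is monic -> size q = n.+1 -> (size p <= n.+1)%N ->
  (size (p - p`_n *: q)%R <= n)%N.
Proof.
move=> /monicP q_monic size_q size_p.
have lead_q : q`_n = 1 by rewrite -q_monic lead_coefE size_q.
apply/leq_sizeP => j; rewrite leq_eqVlt; case/predU1P=> [<-|lt_nj].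
  by rewrite coefB coefZ lead_q mulr1 subrr.
rewrite coefB coefZ (nth_default _ (leq_trans size_p lt_nj)).
by rewrite [q`_j]nth_default ?size_q // mulr0 subr0.
Qed.

Lemma sum_alt_bin (R : nzRingType) m n : (m <= n)%N ->
  \sum_(0 <= j < n.+1) (-1) ^+ j * 'C(m, j)%:R = (m == 0)%:R :> R.
Proof.
move=> le_mn; have -> : (m == 0)%:R = (1 - 1 : R) ^+ m by rewrite subrr expr0n.
rewrite (exprBn_comm _ (commr1 1)).
rewrite (big_ord_widen n.+1 (fun j => ((-1) ^+ j * 1 ^+ (m - j) * 1 ^+ j) *+ 'C(m, j))) //.
rewrite big_mkord [RHS]big_mkcond; apply: eq_bigr => j _ /=.
case: ltnP => [_|lt_mj]; first by rewrite !expr1n !mulr1 mulr_natr.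
by rewrite bin_small // mulr0.
Qed.

Section NewtonSum.
Variable C : numFieldType.

Definition ffactp (n : nat) : {poly C} := \prod_(k < n) ('X - k%:R%:P).

Lemma ffactpS n : ffactp n.+1 = ffactp n * ('X - n%:R%:P).
Proof. by rewrite /ffactp big_ord_recr. Qed.

Lemma ffactp_monic n : ffactp n \is monic.
Proof. exact: monic_prod_XsubC. Qed.

Lemma size_ffactp n : size (ffactp n) = n.+1.
Proof. by rewrite size_prod_XsubC -[index_enum _]enumT size_enum_ord. Qed.

Lemma horner_ffactp_nat i m : (ffactp i).[m%:R] = (m ^_ i)%:R.
Proof.
elim: i => [|i IH]; first by rewrite /ffactp big_ord0 hornerC.
rewrite ffactpS hornerM IH hornerXsubC ffactnSr natrM.
have [le_im|lt_mi] := leqP i m; first by rewrite natrB.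
by rewrite (ffact_small lt_mi) !mul0r.
Qed.

Lemma horner_ffactp_Nnat i r :
  r`!%:R * (ffactp i).[- (r.+1)%:R] = (-1) ^+ i * (r + i)`!%:R.
Proof.
elim: i => [|i IH]; first by rewrite /ffactp big_ord0 hornerC mulr1 mul1r addn0.
rewrite ffactpS hornerM hornerXsubC mulrA IH addnS factS natrM exprS -!natr1 natrD.
ring.
Qed.

Definition fdiff0 (l : nat) (p : {poly C}) : C :=
  \sum_(0 <= j < l.+1) (-1) ^+ j * 'C(l, j)%:R * p.[(l - j)%:R].

Lemma fdiff0_linear l p q c : fdiff0 l (p + c *: q) = fdiff0 l p + c * fdiff0 l q.
Proof.
rewrite /fdiff0 mulr_sumr -big_split /=; apply: eq_bigr => j _.
by rewrite hornerD hornerZ; ring.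
Qed.

Lemma fdiff0_ffactp l i : fdiff0 l (ffactp i) = (l == i)%:R * l`!%:R.
Proof.
rewrite /fdiff0.
under eq_bigr => j _ do rewrite horner_ffactp_nat -mulrA -natrM mul_bin_ffact natrM mulrCA.
rewrite -mulr_sumr; have [le_il|lt_li] := leqP i l; last first.
  by rewrite ffact_small // ltn_eqF // !mul0r.
rewrite sum_alt_bin ?leq_subr // subn_eq0.
have [->|neq_li] := eqVneq l i; first by rewrite leqnn ffactnn mulr1 mul1r.
by rewrite leqNgt ltn_neqAle eq_sym neq_li le_il mulr0 mul0r.
Qed.

(* Newton's expansion of [p] in the basis [ffactp l], evaluated at [-(r+1)] and
   scaled by [r!] (cf. [horner_ffactp_Nnat]). *)
Definition newton_sum (N r : nat) (p : {poly C}) : C :=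
  \sum_(0 <= l < N.+1) (l`!%:R)^-1 * fdiff0 l p * ((-1) ^+ l * (l + r)`!%:R).

Lemma newton_sum_linear N r p q c :
  newton_sum N r (p + c *: q) = newton_sum N r p + c * newton_sum N r q.
Proof.
rewrite /newton_sum mulr_sumr -big_split /=; apply: eq_bigr => l _.
by rewrite fdiff0_linear; ring.
Qed.

Lemma newton_sum0 N r : newton_sum N r 0 = 0.
Proof.
rewrite /newton_sum big1 // => l _.
by rewrite /fdiff0 big1 ?mulr0 ?mul0r // => j _; rewrite horner0 mulr0.
Qed.

Lemma newton_sum_ffactp N r i : (i <= N)%N ->
  newton_sum N r (ffactp i) = r`!%:R * (ffactp i).[- (r.+1)%:R].
Proof.
move=> le_iN; rewrite horner_ffactp_Nnat /newton_sum.
under eq_bigr => l _.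
  rewrite fdiff0_ffactp [X in X * _]mulrCA mulVf ?mulr1; last first.
    by rewrite pnatr_eq0 -lt0n fact_gt0.
  over.
rewrite big_mkord (bigD1 (Ordinal (le_iN : (i < N.+1)%N))) //= eqxx mul1r addnC.
rewrite big1 ?addr0 // => l; rewrite -(inj_eq val_inj) /= => /negbTE ->.
by rewrite mul0r.
Qed.

Lemma newton_sum_poly N r (p : {poly C}) : (size p <= N.+1)%N ->
  newton_sum N r p = r`!%:R * p.[- (r.+1)%:R].
Proof.
suff: forall n, (n <= N.+1)%N -> forall p : {poly C}, (size p <= n)%N ->
    newton_sum N r p = r`!%:R * p.[- (r.+1)%:R] by apply.
elim=> [_ {}p /size_poly_leq0P ->|n IH lt_nN {}p size_p].
  by rewrite newton_sum0 horner0 mulr0.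
have size_q := size_subr_coefZ_monic (ffactp_monic n) (size_ffactp n) size_p.
have -> : p = (p - p`_n *: ffactp n) + p`_n *: ffactp n by rewrite subrK.
rewrite newton_sum_linear IH ?(ltnW lt_nN) // newton_sum_ffactp // [in RHS]hornerD hornerZ.
ring.
Qed.

End NewtonSum.

Lemma sum_genStirling_fact (C : numFieldType) (p1 p2 r : nat) (x1 x2 : C) :
  \sum_(0 <= l < (p1 + p2).+1)
      genStirling x1 x2 p1 p2 l * ((-1) ^+ l * (l + r)`!%:R)
    = r`!%:R * (x1 - r%:R - 1) ^+ p1 * (x2 - r%:R - 1) ^+ p2.
Proof.
pose f : {poly C} := ('X - (- x1)%:P) ^+ p1 * ('X - (- x2)%:P) ^+ p2.
have horner_f x : f.[x] = (x + x1) ^+ p1 * (x + x2) ^+ p2.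
  by rewrite hornerM !horner_exp !hornerXsubC !opprK.
have size_f : (size f <= (p1 + p2).+1)%N.
  by rewrite size_Mmonic ?monic_neq0 ?monic_exp ?monicXsubC // !size_exp_XsubC addSn addnS.
transitivity (newton_sum (p1 + p2) r f).
  apply: eq_bigr => l _; congr (_ * _ * _).
  by apply: eq_bigr => j _; rewrite horner_f mulrA.
have shift (x : C) : - (r.+1)%:R + x = x - r%:R - 1 by rewrite -natr1; ring.
by rewrite newton_sum_poly // horner_f !shift mulrA.
Qed.

Lemma polyBernoulli2_0 (C : numFieldType) p1 p2 (x1 x2 : C) :
  polyBernoulli2 0 p1 p2 x1 x2 = (x1 - 1) ^+ p1 * (x2 - 1) ^+ p2.
Proof.
have := sum_genStirling_fact p1 p2 0 x1 x2; rewrite mul1r !subr0 => <-.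
by apply: eq_bigr => l _; rewrite oppr0 expr0z mulr1 addn0.
Qed.

Lemma polyBernoulli2_N1 (C : numFieldType) p1 p2 (x1 x2 : C) :
  polyBernoulli2 (-1) p1 p2 x1 x2 = (x1 - 2%:R) ^+ p1 * (x2 - 2%:R) ^+ p2.
Proof.
have sub2 (x : C) : x - 1%:R - 1 = x - 2%:R by rewrite -natr1; ring.
have := sum_genStirling_fact p1 p2 1 x1 x2; rewrite mul1r !sub2 => <-.
apply: eq_bigr => l _; rewrite opprK expr1z addn1 factS natrM; ring.
Qed.

Local Open Scope complex_scope.

Theorem mainTheorem7 (R : realType) (p1 p2 r : nat) (x1 x2 : R[i]) :
  (\sum_(0 <= l < (p1 + p2).+1)
      genStirling x1 x2 p1 p2 l * ((-1) ^+ l * (l + r)`!%:R)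
    = r`!%:R * (x1 - r%:R - 1) ^+ p1 * (x2 - r%:R - 1) ^+ p2)
  /\ polyBernoulli2 0 p1 p2 x1 x2 = (x1 - 1) ^+ p1 * (x2 - 1) ^+ p2
  /\ polyBernoulli2 (-1) p1 p2 x1 x2 = (x1 - 2%:R) ^+ p1 * (x2 - 2%:R) ^+ p2.
Proof.
split; first exact: sum_genStirling_fact.
by split; [exact: polyBernoulli2_0 | exact: polyBernoulli2_N1].
Qed.
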